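(* There exists an absolute constant $c_2>0$ such that for every $k\ge1$ and $p\in[0,1]$: if $f_p(n,2n)<c_2$ for some $n\ge1$, then there is $c>0$ such that for every $m\ge1$, $\mathbf P_p\big[0\overset{\mathbb S_k}{\longleftrightarrow}\partial\overline{B_m}\big]\le e^{-cm}$.
   Context: $\mathbb S_k=\mathbb Z^2\times\{0,\dots,k\}$ with nearest-neighbour edges; $\mathbf P_p$ Bernoulli bond percolation. For $T\subset\mathbb Z^2$, $\overline T=T\times\{0,\dots,k\}$; $B_m=[-m,m]^2$; $\partial U$ is the set of vertices of $U$ with a neighbour outside $U$. $f_p(m,n)$ is the probability of an open path inside $\overline{[0,m]\times[0,n]}$ from $\overline{\{0\}\times[0,n]}$ to $\overline{\{m\}\times[0,n]}$. $0\overset{\mathbb S_k}{\longleftrightarrow}\partial\overline{B_m}$ is the event of an open path from the origin to $\partial\overline{B_m}$. *)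

From Stdlib Require Import Reals ZArith List ClassicalEpsilon.
Import ListNotations.
Open Scope R_scope.

Definition V : Type := (Z * Z * Z)%type.

Definition vx (v : V) : Z := fst (fst v).
Definition vy (v : V) : Z := snd (fst v).
Definition vz (v : V) : Z := snd v.

Definition origin : V := (0%Z, 0%Z, 0%Z).

Definition shift (v : V) (d : nat) : V :=
  match d with
  | O => ((vx v + 1)%Z, vy v, vz v)
  | S O => (vx v, (vy v + 1)%Z, vz v)
  | _ => (vx v, vy v, (vz v + 1)%Z)
  end.

Definition inSlab (k : nat) (v : V) : Prop := (0 <= vz v <= Z.of_nat k)%Z.

Definition adjacent (u w : V) : Prop :=
  exists d : nat, (d < 3)%nat /\ (w = shift u d \/ u = shift w d).

(* A configuration assigns open(true)/closed(false) to each edge {v, v+e_d}. *)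
Definition cfg : Type := V -> nat -> bool.

Definition open_edge (om : cfg) (u w : V) : Prop :=
  exists d : nat, (d < 3)%nat /\
    ((w = shift u d /\ om u d = true) \/ (u = shift w d /\ om w d = true)).

Inductive connected_in (Rg : V -> Prop) (om : cfg) (x : V) : V -> Prop :=
  | conn_refl : Rg x -> connected_in Rg om x x
  | conn_step : forall y z, connected_in Rg om x y -> Rg z -> open_edge om y z ->
      connected_in Rg om x z.

Definition inBox (a1 b1 a2 b2 : Z) (k : nat) (v : V) : Prop :=
  (a1 <= vx v <= b1)%Z /\ (a2 <= vy v <= b2)%Z /\ (0 <= vz v <= Z.of_nat k)%Z.

Definition inBoxb (a1 b1 a2 b2 : Z) (k : nat) (v : V) : bool :=
  (Z.leb a1 (vx v) && Z.leb (vx v) b1 && Z.leb a2 (vy v) && Z.leb (vy v) b2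
   && Z.leb 0 (vz v) && Z.leb (vz v) (Z.of_nat k))%bool.

Definition zrange (a b : Z) : list Z :=
  map (fun i => (a + Z.of_nat i)%Z) (seq 0 (Z.to_nat (b - a + 1))).

Definition box_edges (a1 b1 a2 b2 : Z) (k : nat) : list (V * nat) :=
  flat_map (fun x =>
  flat_map (fun y =>
  flat_map (fun z =>
    flat_map (fun d =>
      if inBoxb a1 b1 a2 b2 k (shift (x, y, z) d) then [((x, y, z), d)] else [])
      [0%nat; 1%nat; 2%nat])
    (zrange 0 (Z.of_nat k)))
    (zrange a2 b2))
    (zrange a1 b1).

Definition V_eqb (u w : V) : bool :=
  (Z.eqb (vx u) (vx w) && Z.eqb (vy u) (vy w) && Z.eqb (vz u) (vz w))%bool.

Definition upd (om : cfg) (e : V * nat) (b : bool) : cfg :=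
  fun v d => if (V_eqb v (fst e) && Nat.eqb d (snd e))%bool then b else om v d.

Definition all_closed : cfg := fun _ _ => false.

Definition indicator (P : Prop) : R :=
  if excluded_middle_informative P then 1 else 0.

(* Product-measure probability of event A, where the edges in es are
   independently open with probability p (all other edges closed).
   For an event depending only on the edges in es (listed without repetition),
   this is exactly P_p[A]. *)
Fixpoint probAux (p : R) (es : list (V * nat)) (om : cfg) (A : cfg -> Prop) : R :=
  match es with
  | [] => indicator (A om)
  | e :: es' => p * probAux p es' (upd om e true) A
                + (1 - p) * probAux p es' (upd om e false) A
  end.

Definition Pr (p : R) (es : list (V * nat)) (A : cfg -> Prop) : R :=
  probAux p es all_closed A.

Definition f_cross (k : nat) (p : R) (m n : nat) : R :=
  Pr p (box_edges 0 (Z.of_nat m) 0 (Z.of_nat n) k)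
    (fun om => exists u w : V,
       inBox 0 (Z.of_nat m) 0 (Z.of_nat n) k u /\ vx u = 0%Z /\
       inBox 0 (Z.of_nat m) 0 (Z.of_nat n) k w /\ vx w = Z.of_nat m /\
       connected_in (inBox 0 (Z.of_nat m) 0 (Z.of_nat n) k) om u w).

Definition ballbar (k m : nat) : V -> Prop :=
  inBox (- Z.of_nat m) (Z.of_nat m) (- Z.of_nat m) (Z.of_nat m) k.

Definition vboundary (k : nat) (U : V -> Prop) (v : V) : Prop :=
  U v /\ exists w, inSlab k w /\ adjacent v w /\ ~ U w.

(* P_p[0 <-> d ballbar_m] in S_k: the event (open path in S_k from 0 to the
   boundary) only depends on edges of ballbar_m, so its probability is computed
   with those edges. *)
Definition arm_prob (k : nat) (p : R) (m : nat) : R :=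
  Pr p (box_edges (- Z.of_nat m) (Z.of_nat m) (- Z.of_nat m) (Z.of_nat m) k)
    (fun om => exists v, vboundary k (ballbar k m) v /\
                         connected_in (inSlab k) om origin v).

(* Let G = f_p(N, 2N).  An open crossing of an N x 3N strip over
   its width N crosses one of its two N x 2N halves, or its cluster crosses the
   middle N x N square the other way; by translation and rotation invariance it
   has probability at most 3G.  Tile the plane by N x N blocks and call a block
   bad if one of the four strips of the ring of width N around it is crossed
   over its width, an event of probability at most 12G which depends only on
   the 3 x 3 blocks around it.  An open path from the origin to the boundary of
   B_m visits a chain of at least m/N - 2 distinct adjacent blocks, all bad;
   among the first 49q of them, q are pairwise at distance >= 4, so their bad
   events are independent.  As there are 9^R chains of R steps from the origin,
   P[0 <-> dB_m] <= (9^49 * 12G)^q with q ~ m/(51N), which is <= 2^(-q) as soon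
   as G < 1/(24 * 9^49).  For small m it suffices that the probability is < 1,
   which holds since G < 1 forces p < 1. *)

From Stdlib Require Import Reals ZArith List ClassicalEpsilon.
From Stdlib Require Import Lra Lia Psatz FunctionalExtensionality Permutation.
Import ListNotations.
Open Scope R_scope.

(** * The product measure on finitely many edges *)

Fixpoint expect (p : R) (es : list (V * nat)) (om : cfg) (F : cfg -> R) : R :=
  match es with
  | [] => F om
  | e :: es' => p * expect p es' (upd om e true) F + (1 - p) * expect p es' (upd om e false) F
  end.

Definition ind (A : cfg -> Prop) : cfg -> R := fun om => indicator (A om).

Lemma Pr_expect p es A : Pr p es A = expect p es all_closed (ind A).
Proof.
  unfold Pr; generalize all_closed; induction es as [|e es IH]; intros om; simpl; auto.
  rewrite !IH; reflexivity.
Qed.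

Definition edge_eq_dec (e e' : V * nat) : {e = e'} + {e <> e'}.
Proof. repeat decide equality; apply Z.eq_dec. Defined.

Lemma V_eqb_eq u w : V_eqb u w = true <-> u = w.
Proof.
  destruct u as [[a b] c], w as [[a' b'] c']; unfold V_eqb, vx, vy, vz; simpl.
  rewrite !Bool.andb_true_iff, !Z.eqb_eq. split.
  - intros [[-> ->] ->]; reflexivity.
  - intro H; inversion H; subst; auto.
Qed.

Lemma updE om e b v d : upd om e b v d = if edge_eq_dec (v, d) e then b else om v d.
Proof.
  unfold upd. destruct e as [w d']; cbn [fst snd].
  destruct (edge_eq_dec (v, d) (w, d')) as [E|E].
  - inversion E; subst. rewrite (proj2 (V_eqb_eq w w) eq_refl), Nat.eqb_refl; reflexivity.
  - destruct (V_eqb v w) eqn:E1, (Nat.eqb d d') eqn:E2; simpl; auto.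
    apply V_eqb_eq in E1; apply Nat.eqb_eq in E2; subst; congruence.
Qed.

Lemma upd_upd om e b b' : upd (upd om e b) e b' = upd om e b'.
Proof.
  do 2 (apply functional_extensionality; intro).
  rewrite !updE. destruct edge_eq_dec; auto.
Qed.

Lemma upd_comm om e e' b b' : e <> e' -> upd (upd om e b) e' b' = upd (upd om e' b') e b.
Proof.
  intro Hne. do 2 (apply functional_extensionality; intro).
  rewrite !updE. do 2 destruct edge_eq_dec; subst; congruence.
Qed.

Lemma upd_all_closed e : upd all_closed e false = all_closed.
Proof.
  do 2 (apply functional_extensionality; intro).
  rewrite updE; destruct edge_eq_dec; auto.
Qed.

Section Expectation.
Variable p : R.

Lemma expect_ext es om F G : (forall x, F x = G x) -> expect p es om F = expect p es om G.
Proof. intro H; replace G with F; auto. apply functional_extensionality; auto. Qed.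

Lemma expect_const es om c : expect p es om (fun _ => c) = c.
Proof. revert om; induction es; intro om; simpl; auto. rewrite !IHes; ring. Qed.

Lemma expect_plus es om F G :
  expect p es om (fun x => F x + G x) = expect p es om F + expect p es om G.
Proof. revert om; induction es; intro om; simpl; auto. rewrite !IHes; ring. Qed.

Lemma expect_app es1 es2 om F :
  expect p (es1 ++ es2) om F = expect p es1 om (fun om' => expect p es2 om' F).
Proof. revert om; induction es1; intro om; simpl; auto. rewrite !IHes1; auto. Qed.

Lemma expect_upd_in es om e b F : In e es -> expect p es (upd om e b) F = expect p es om F.
Proof.
  revert om; induction es as [|e' es IH]; intros om Hin; simpl in *; [tauto|].
  destruct (edge_eq_dec e e') as [<-|Hne].
  - rewrite !upd_upd; auto.
  - destruct Hin as [Hin|Hin]; [congruence|].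
    rewrite !(upd_comm _ e e') by auto. rewrite !IH; auto.
Qed.

Lemma expect_perm es es' F : Permutation es es' -> forall om, expect p es om F = expect p es' om F.
Proof.
  induction 1; intros om; simpl; auto.
  - rewrite !IHPermutation; auto.
  - destruct (edge_eq_dec x y) as [<-|Hne].
    + rewrite !upd_upd; ring.
    + rewrite !(upd_comm _ x y) by auto. ring.
  - rewrite IHPermutation1; auto.
Qed.

Lemma expect_nodup es F om : expect p es om F = expect p (nodup edge_eq_dec es) om F.
Proof.
  revert om; induction es as [|e es IH]; intros om; [reflexivity|]. cbn [nodup].
  destruct (in_dec edge_eq_dec e es) as [Hin|Hin]; simpl.
  - rewrite !expect_upd_in, <- IH by auto. ring.
  - rewrite !IH; auto.
Qed.

Lemma expect_same_edges es es' F om :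
  (forall e, In e es <-> In e es') -> expect p es om F = expect p es' om F.
Proof.
  intro H. rewrite (expect_nodup es), (expect_nodup es').
  apply expect_perm, NoDup_Permutation; try apply NoDup_nodup.
  intro e; rewrite !nodup_In; auto.
Qed.

Hypothesis Hp : 0 <= p <= 1.

Lemma expect_le es om F G : (forall x, F x <= G x) -> expect p es om F <= expect p es om G.
Proof.
  intros HFG; revert om; induction es as [|e es IH]; intro om; simpl; auto.
  pose proof (IH (upd om e true)); pose proof (IH (upd om e false)). nra.
Qed.

Lemma expect_ge0 es om F : (forall x, 0 <= F x) -> 0 <= expect p es om F.
Proof. intros HF. rewrite <- (expect_const es om 0). apply expect_le; auto. Qed.

Lemma expect_ge_all_closed es F : (forall x, 0 <= F x) ->
  (1 - p) ^ length es * F all_closed <= expect p es all_closed F.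
Proof.
  intros HF; induction es as [|e es IH]; simpl; [lra|].
  rewrite upd_all_closed. pose proof (expect_ge0 es (upd all_closed e true) F HF). nra.
Qed.

End Expectation.

Lemma indicator_bounds P : 0 <= indicator P <= 1.
Proof. unfold indicator; destruct excluded_middle_informative; lra. Qed.

Lemma indicator_true (P : Prop) : P -> indicator P = 1.
Proof. unfold indicator; destruct excluded_middle_informative; tauto. Qed.

Lemma indicator_false (P : Prop) : ~ P -> indicator P = 0.
Proof. unfold indicator; destruct excluded_middle_informative; tauto. Qed.

Lemma indicator_iff (P Q : Prop) : (P <-> Q) -> indicator P = indicator Q.
Proof. unfold indicator; do 2 destruct excluded_middle_informative; tauto. Qed.

Lemma indicator_le (P Q : Prop) : (P -> Q) -> indicator P <= indicator Q.
Proof. unfold indicator; do 2 destruct excluded_middle_informative; try lra; tauto. Qed.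

Lemma indicator_and (P Q : Prop) : indicator (P /\ Q) = indicator P * indicator Q.
Proof. unfold indicator; do 3 destruct excluded_middle_informative; try lra; tauto. Qed.

Lemma indicator_or (P Q : Prop) : indicator (P \/ Q) <= indicator P + indicator Q.
Proof. unfold indicator; do 3 destruct excluded_middle_informative; try lra; tauto. Qed.

Lemma indicator_not (P : Prop) : indicator (~ P) = 1 - indicator P.
Proof. unfold indicator; do 2 destruct excluded_middle_informative; try lra; tauto. Qed.

Fixpoint sumR {X} (L : list X) (f : X -> R) : R :=
  match L with [] => 0 | x :: L' => f x + sumR L' f end.

Lemma sumR_le_const {X} (L : list X) f c :
  (forall x, In x L -> f x <= c) -> sumR L f <= INR (length L) * c.
Proof.
  induction L as [|x L IH]; cbn [sumR length]; intros H; [simpl; lra|].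
  rewrite S_INR. pose proof (H x (or_introl eq_refl)).
  pose proof (IH (fun y Hy => H y (or_intror Hy))). lra.
Qed.

Lemma indicator_exists_le_sum {X} (L : list X) (A : X -> Prop) :
  indicator (exists x, In x L /\ A x) <= sumR L (fun x => indicator (A x)).
Proof.
  induction L as [|a L IH]; simpl.
  - rewrite indicator_false; [lra|]. intros [x [[] _]].
  - eapply Rle_trans; [|apply Rplus_le_compat_l, IH].
    eapply Rle_trans; [|apply indicator_or]. apply indicator_le.
    intros [x [[->|H] Hx]]; eauto.
Qed.

Section Events.
Variable p : R.
Hypothesis Hp : 0 <= p <= 1.

Lemma expect_ind_le es om (A B : cfg -> Prop) :
  (forall x, A x -> B x) -> expect p es om (ind A) <= expect p es om (ind B).
Proof. intros H; apply expect_le; auto; intro x; apply indicator_le; auto. Qed.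

Lemma expect_ind_or es om (A B : cfg -> Prop) :
  expect p es om (ind (fun x => A x \/ B x)) <= expect p es om (ind A) + expect p es om (ind B).
Proof. rewrite <- expect_plus. apply expect_le; auto. intro; apply indicator_or. Qed.

Lemma expect_ind_exists {X} es om (L : list X) (A : X -> cfg -> Prop) :
  expect p es om (ind (fun x => exists i, In i L /\ A i x))
  <= sumR L (fun i => expect p es om (ind (A i))).
Proof.
  eapply Rle_trans.
  - apply expect_le; auto. intro x. apply (indicator_exists_le_sum L (fun i => A i x)).
  - induction L as [|i L IH]; simpl.
    + rewrite expect_const; lra.
    + rewrite expect_plus. apply Rplus_le_compat; [apply Rle_refl|exact IH].
Qed.

End Events.

Section Locality.
Variable p : R.

Definition agree (S : V * nat -> Prop) (om om' : cfg) := forall v d, S (v, d) -> om v d = om' v d.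
Definition local_fun (S : V * nat -> Prop) (F : cfg -> R) := forall om om', agree S om om' -> F om = F om'.
Definition local_event (S : V * nat -> Prop) (A : cfg -> Prop) :=
  forall om om', agree S om om' -> (A om <-> A om').

Lemma local_event_ind S A : local_event S A -> local_fun S (ind A).
Proof. intros H om om' Ha. apply indicator_iff, H, Ha. Qed.

Lemma local_event_mono (S1 S2 : V * nat -> Prop) A :
  (forall e, S1 e -> S2 e) -> local_event S1 A -> local_event S2 A.
Proof. intros H HA om om' Ha; apply HA; intros v d Hs; apply Ha, H; auto. Qed.

Lemma agree_upd S om om' e b : agree S om om' -> agree S (upd om e b) (upd om' e b).
Proof. intros H v d Hs. rewrite !updE. destruct edge_eq_dec; auto. Qed.

Lemma agree_upd_out S om e b : ~ S e -> agree S (upd om e b) om.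
Proof. intros H v d Hs. rewrite updE. destruct edge_eq_dec; subst; tauto. Qed.

Lemma expect_agree S F es om om' : local_fun S F -> agree S om om' ->
  expect p es om F = expect p es om' F.
Proof.
  intro HF; revert om om'; induction es as [|e es IH]; intros om om' Ha; simpl; auto.
  rewrite (IH (upd om e true) (upd om' e true)), (IH (upd om e false) (upd om' e false));
    auto using agree_upd.
Qed.

Definition decide_pred (S : V * nat -> Prop) (e : V * nat) : bool :=
  if excluded_middle_informative (S e) then true else false.

Lemma decide_pred_true S e : decide_pred S e = true <-> S e.
Proof. unfold decide_pred; destruct excluded_middle_informative; split; auto; congruence. Qed.

Lemma expect_filter S F es om : local_fun S F ->
  expect p es om F = expect p (filter (decide_pred S) es) om F.
Proof.
  intro HF; revert om; induction es as [|e es IH]; intro om; [reflexivity|]. cbn [filter].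
  destruct (decide_pred S e) eqn:E; simpl; rewrite !IH; auto.
  assert (He : ~ S e) by (rewrite <- decide_pred_true; congruence).
  rewrite (expect_agree S F _ (upd om e true) om), (expect_agree S F _ (upd om e false) om)
    by auto using agree_upd_out. ring.
Qed.

Lemma expect_local_edges S A es es' om : local_event S A ->
  (forall e, S e -> (In e es <-> In e es')) ->
  expect p es om (ind A) = expect p es' om (ind A).
Proof.
  intros HA Hl. pose proof (local_event_ind _ _ HA) as HF.
  rewrite (expect_filter S _ es), (expect_filter S _ es') by auto.
  apply expect_same_edges. intro e; rewrite !filter_In, !decide_pred_true. specialize (Hl e). tauto.
Qed.

Lemma expect_mul_local S H G es om : local_fun S H -> (forall e, In e es -> ~ S e) ->
  expect p es om (fun x => H x * G x) = H om * expect p es om G.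
Proof.
  intros HH; revert om; induction es as [|e es IH]; intros om Hes; simpl; auto.
  rewrite !IH by (intros; apply Hes; simpl; auto).
  rewrite (HH (upd om e true) om), (HH (upd om e false) om)
    by (apply agree_upd_out, Hes; simpl; auto). ring.
Qed.

Lemma expect_ind_and_disjoint es om S1 S2 A B :
  local_event S1 A -> local_event S2 B -> (forall e, S1 e -> S2 e -> False) ->
  expect p es om (ind (fun x => A x /\ B x)) = expect p es om (ind A) * expect p es om (ind B).
Proof.
  intros HA HB Hd.
  set (es1 := filter (decide_pred S1) es).
  set (es2 := filter (decide_pred (fun e => ~ S1 e)) es).
  assert (Hsplit : forall e, In e es <-> In e (es1 ++ es2)).
  { intro e; rewrite in_app_iff; unfold es1, es2; rewrite !filter_In, !decide_pred_true.
    destruct (classic (S1 e)); tauto. }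
  assert (Hes2 : forall e, In e es2 -> ~ S1 e)
    by (intros e He; unfold es2 in He; rewrite filter_In, decide_pred_true in He; tauto).
  assert (Hes1 : forall e, In e es1 -> ~ S2 e)
    by (intros e He Hs; unfold es1 in He; rewrite filter_In, decide_pred_true in He; eapply Hd; eauto; tauto).
  rewrite (expect_same_edges p es (es1 ++ es2)), expect_app by auto.
  rewrite (expect_ext p es1 om _ (fun om' => expect p es2 om' (ind B) * ind A om')).
  2:{ intro om'. rewrite Rmult_comm, <- (expect_mul_local S1) by auto using local_event_ind.
      apply expect_ext. intro; apply indicator_and. }
  rewrite (expect_mul_local S2); auto.
  2:{ intros x y Ha. apply (expect_agree S2); auto using local_event_ind. }
  rewrite Rmult_comm. f_equal.
  - unfold es1; rewrite <- (expect_filter S1); auto using local_event_ind.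
  - apply (expect_local_edges S2); auto.
    intros e Hs; rewrite Hsplit, in_app_iff; specialize (Hes1 e); tauto.
Qed.

End Locality.

(** * Open paths and crossings *)

Section Paths.
Local Open Scope Z_scope.

Definition cross (Rg : V -> Prop) (f : V -> Z) (a b : Z) (om : cfg) : Prop :=
  exists u w, Rg u /\ f u = a /\ Rg w /\ f w = b /\ connected_in Rg om u w.

Lemma connected_in_ends Rg om x y : connected_in Rg om x y -> Rg x /\ Rg y.
Proof. induction 1; tauto. Qed.

Lemma connected_in_mono (R1 R2 : V -> Prop) om x y : (forall v, R1 v -> R2 v) ->
  connected_in R1 om x y -> connected_in R2 om x y.
Proof. intros H; induction 1; [apply conn_refl|eapply conn_step]; eauto. Qed.

Lemma connected_in_trans Rg om x y z :
  connected_in Rg om x y -> connected_in Rg om y z -> connected_in Rg om x z.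
Proof. intros H1 H2; induction H2; auto; eapply conn_step; eauto. Qed.

Lemma connected_in_edge Rg om y z : Rg y -> Rg z -> open_edge om y z -> connected_in Rg om y z.
Proof. intros; eapply conn_step; eauto; apply conn_refl; auto. Qed.

Lemma open_edge_sym om y z : open_edge om y z -> open_edge om z y.
Proof. intros [d [Hd H]]; exists d; split; auto; tauto. Qed.

Lemma connected_in_sym Rg om x y : connected_in Rg om x y -> connected_in Rg om y x.
Proof.
  induction 1 as [|y z Hy IH Hz Hyz]; [apply conn_refl; auto|].
  apply connected_in_trans with y; auto.
  apply connected_in_edge; auto using open_edge_sym. apply (connected_in_ends _ _ _ _ Hy).
Qed.

Lemma connected_in_all_closed Rg x y : connected_in Rg all_closed x y -> x = y.
Proof.
  induction 1 as [|y z _ IH _ [d [_ [[_ H]|[_ H]]]]]; auto; discriminate.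
Qed.

Lemma cross_mono (R1 R2 : V -> Prop) f a b om :
  (forall v, R1 v -> R2 v) -> cross R1 f a b om -> cross R2 f a b om.
Proof.
  intros H (u & w & H1 & H2 & H3 & H4 & H5).
  exists u, w; repeat split; auto; eapply connected_in_mono; eauto.
Qed.

Definition neighbours (y z : V) : Prop :=
  Z.abs (vx z - vx y) <= 1 /\ Z.abs (vy z - vy y) <= 1 /\ Z.abs (vz z - vz y) <= 1.

Lemma adjacent_neighbours u w : adjacent u w -> neighbours u w.
Proof.
  intros [d [Hd [->| ->]]]; unfold neighbours;
    (destruct d as [|[|[|d]]]; [| | |lia]; simpl; unfold vx, vy, vz; simpl; lia).
Qed.

Lemma open_edge_neighbours om y z : open_edge om y z -> neighbours y z.
Proof.
  intros [d [Hd [[-> _]|[-> _]]]]; apply adjacent_neighbours; exists d; auto.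
Qed.

Definition lipschitz (f : V -> Z) := forall y z, neighbours y z -> Z.abs (f z - f y) <= 1.

Lemma lipschitz_vx : lipschitz vx. Proof. intros y z; unfold neighbours; lia. Qed.
Lemma lipschitz_vy : lipschitz vy. Proof. intros y z; unfold neighbours; lia. Qed.

Lemma connected_in_restrict (Rg Q : V -> Prop) om u w : connected_in Rg om u w ->
  (forall v, connected_in Rg om u v -> Q v) -> connected_in (fun v => Rg v /\ Q v) om u w.
Proof.
  intros Hc HQ. induction Hc as [|y z Hy IH Hz Hyz].
  - apply conn_refl; split; auto. apply HQ, conn_refl; auto.
  - eapply conn_step; [apply IH|split; auto|auto]. apply HQ. eapply conn_step; eauto.
Qed.

Lemma connected_in_level_crossing Rg om f u w s t : lipschitz f ->
  connected_in Rg om u w -> f u <= s -> t <= f w -> s <= t ->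
  exists u' w', f u' = s /\ f w' = t /\ connected_in (fun v => Rg v /\ s <= f v <= t) om u' w'.
Proof.
  intros Hf Hc Hu Hw Hst.
  set (R' := fun v => Rg v /\ s <= f v <= t).
  assert (Inv : forall y, connected_in Rg om u y ->
    f y <= s \/ (s <= f y <= t /\ exists u', f u' = s /\ connected_in R' om u' y) \/
    (exists u' w', f u' = s /\ f w' = t /\ connected_in R' om u' w')).
  { induction 1 as [|y z Hy IH Hz Hyz]; [left; auto|].
    pose proof (Hf y z (open_edge_neighbours _ _ _ Hyz)) as Hl.
    pose proof (proj2 (connected_in_ends _ _ _ _ Hy)) as Ry.
    destruct IH as [IH|[[IH1 [u' [Hu' Hc']]]|IH]].
    - destruct (Z_le_gt_dec (f z) s); [left; auto|].
      destruct (Z.eq_dec s t).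
      + right; right. exists y, y; repeat split; try lia. apply conn_refl; split; auto; lia.
      + right; left; split; [lia|]. exists y; split; [lia|].
        apply connected_in_edge; auto; split; auto; lia.
    - destruct (Z.eq_dec (f y) t); [right; right; exists u', y; auto|].
      destruct (Z_le_gt_dec s (f z)); [|left; lia].
      right; left; split; [lia|]. exists u'; split; auto.
      eapply conn_step; eauto. split; auto; lia.
    - right; right; auto. }
  destruct (Inv w Hc) as [H|[[H1 [u' [Hu' Hc']]]|H]]; auto.
  - exists w, w. repeat split; try lia.
    apply conn_refl. split; [apply (connected_in_ends _ _ _ _ Hc)|lia].
  - exists u', w; repeat split; auto; lia.
Qed.

Definition edges_in (Rg : V -> Prop) (e : (V * nat)%type) : Prop :=
  (snd e < 3)%nat /\ Rg (fst e) /\ Rg (shift (fst e) (snd e)).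

Lemma edges_in_mono (R1 R2 : V -> Prop) e :
  (forall v, R1 v -> R2 v) -> edges_in R1 e -> edges_in R2 e.
Proof. unfold edges_in; intuition. Qed.

Lemma connected_in_agree Rg om om' u w :
  agree (edges_in Rg) om om' -> connected_in Rg om u w -> connected_in Rg om' u w.
Proof.
  intros Ha Hc; induction Hc as [|y z Hy IH Hz Hyz]; [apply conn_refl; auto|].
  eapply conn_step; eauto. pose proof (proj2 (connected_in_ends _ _ _ _ Hy)) as Ry.
  destruct Hyz as [d [Hd [[E H]|[E H]]]]; exists d; split; auto; [left|right]; split; auto;
    rewrite <- Ha; auto; repeat split; simpl; auto; congruence.
Qed.

Lemma cross_local Rg f a b : local_event (edges_in Rg) (cross Rg f a b).
Proof.
  intros om om' Ha. split; intros (u & w & H1 & H2 & H3 & H4 & H5); exists u, w;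
    repeat split; auto; eapply connected_in_agree; eauto.
  intros v d Hs; symmetry; auto.
Qed.

Lemma zrange_In a b i : In i (zrange a b) <-> a <= i <= b.
Proof.
  unfold zrange. rewrite in_map_iff. split.
  - intros [j [<- Hj]]. apply in_seq in Hj. lia.
  - intro H. exists (Z.to_nat (i - a)). split; [lia|]. apply in_seq. lia.
Qed.

Lemma inBoxb_spec a1 b1 a2 b2 k v : inBoxb a1 b1 a2 b2 k v = true <-> inBox a1 b1 a2 b2 k v.
Proof. unfold inBoxb, inBox. rewrite !Bool.andb_true_iff, !Z.leb_le. tauto. Qed.

Lemma box_edges_In a1 b1 a2 b2 k e :
  In e (box_edges a1 b1 a2 b2 k) <-> edges_in (inBox a1 b1 a2 b2 k) e.
Proof.
  destruct e as [[[x y] z] d]. unfold box_edges, edges_in; cbn [fst snd].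
  rewrite in_flat_map. split.
  - intros [x' [Hx H]]. rewrite in_flat_map in H. destruct H as [y' [Hy H]].
    rewrite in_flat_map in H. destruct H as [z' [Hz H]].
    rewrite in_flat_map in H. destruct H as [d' [Hd H]].
    destruct (inBoxb a1 b1 a2 b2 k (shift (x', y', z') d')) eqn:E; [|destruct H].
    destruct H as [H|[]]. inversion H; subst.
    apply zrange_In in Hx, Hy, Hz. apply inBoxb_spec in E.
    split; [simpl in Hd; lia|]. split; auto. unfold inBox, vx, vy, vz; simpl; lia.
  - intros [Hd [Hb Hs]]. unfold inBox, vx, vy, vz in Hb; simpl in Hb.
    exists x; split; [apply zrange_In; lia|].
    rewrite in_flat_map; exists y; split; [apply zrange_In; lia|].
    rewrite in_flat_map; exists z; split; [apply zrange_In; lia|].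
    rewrite in_flat_map; exists d; split; [simpl; lia|].
    apply inBoxb_spec in Hs. rewrite Hs. simpl; auto.
Qed.

End Paths.

(** * Symmetries of the slab *)

Section Symmetries.
Local Open Scope Z_scope.

Definition edge_of (e : (V * nat)%type) (a b : V) : Prop :=
  (fst e = a /\ shift (fst e) (snd e) = b) \/ (fst e = b /\ shift (fst e) (snd e) = a).

Lemma open_edge_iff om a b : open_edge om a b <->
  exists e, (snd e < 3)%nat /\ om (fst e) (snd e) = true /\ edge_of e a b.
Proof.
  split.
  - intros [d [Hd [[E H]|[E H]]]]; [exists (a, d)|exists (b, d)];
      simpl; repeat split; auto; [left|right]; auto.
  - intros [[v d] [Hd [H [[E1 E2]|[E1 E2]]]]]; simpl in *; subst; exists d; split; auto.
Qed.

Lemma edge_of_swap e a b : edge_of e a b -> edge_of e b a.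
Proof. unfold edge_of; tauto. Qed.

Lemma edge_of_ends e a b a' b' : edge_of e a b -> edge_of e a' b' ->
  (a = a' /\ b = b') \/ (a = b' /\ b = a').
Proof. unfold edge_of; intuition congruence. Qed.

Record lattice_iso := {
  vmap : V -> V; vmap_inv : V -> V;
  emap : (V * nat)%type -> (V * nat)%type; emap_inv : (V * nat)%type -> (V * nat)%type;
  vmapK : forall v, vmap_inv (vmap v) = v;
  vmap_invK : forall v, vmap (vmap_inv v) = v;
  emap_invK : forall e, emap (emap_inv e) = e;
  emapK : forall e, emap_inv (emap e) = e;
  emap_dir : forall e, (snd e < 3)%nat -> (snd (emap e) < 3)%nat;
  emap_inv_dir : forall e, (snd e < 3)%nat -> (snd (emap_inv e) < 3)%nat;
  emap_edge_of : forall e, (snd e < 3)%nat ->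
    edge_of (emap e) (vmap (fst e)) (vmap (shift (fst e) (snd e))) }.

Section Transport.
Variable r : lattice_iso.

Definition transport (om : cfg) : cfg :=
  fun v d => om (fst (emap_inv r (v, d))) (snd (emap_inv r (v, d))).

Lemma transport_upd om e b : upd (transport om) (emap r e) b = transport (upd om e b).
Proof.
  apply functional_extensionality; intro v; apply functional_extensionality; intro d.
  unfold transport. rewrite !updE, <- surjective_pairing.
  destruct (edge_eq_dec (v, d) (emap r e)) as [E|E], (edge_eq_dec (emap_inv r (v, d)) e) as [E'|E'];
    auto; exfalso.
  - apply E'; rewrite E, emapK; auto.
  - apply E; rewrite <- E', emap_invK; auto.
Qed.

Lemma expect_transport p es om G :
  expect p (map (emap r) es) (transport om) G = expect p es om (fun o => G (transport o)).
Proof.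
  revert om; induction es as [|e es IH]; intro om; simpl; auto.
  rewrite !transport_upd, !IH; auto.
Qed.

Lemma open_edge_transport om a b : open_edge (transport om) (vmap r a) (vmap r b) <-> open_edge om a b.
Proof.
  rewrite !open_edge_iff. split.
  - intros [e' [H3 [Ho He]]]. exists (emap_inv r e').
    unfold transport in Ho. rewrite <- surjective_pairing in Ho.
    split; [apply emap_inv_dir; auto|split; auto].
    pose proof (emap_edge_of r (emap_inv r e') (emap_inv_dir r e' H3)) as Hc.
    rewrite emap_invK in Hc.
    destruct (edge_of_ends _ _ _ _ _ He Hc) as [[E1 E2]|[E1 E2]];
      apply (f_equal (vmap_inv r)) in E1, E2; rewrite !vmapK in E1, E2; subst;
      unfold edge_of; tauto.
  - intros [e [H3 [Ho He]]]. exists (emap r e). unfold transport.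
    rewrite <- surjective_pairing, emapK.
    split; [apply emap_dir; auto|split; auto].
    pose proof (emap_edge_of r e H3) as Hc.
    destruct He as [[E1 E2]|[E1 E2]]; subst; auto using edge_of_swap.
Qed.

Section Regions.
Variables R1 R2 : V -> Prop.
Hypothesis HR : forall v, R2 (vmap r v) <-> R1 v.

Lemma connected_in_transport om a b :
  connected_in R1 om a b -> connected_in R2 (transport om) (vmap r a) (vmap r b).
Proof.
  induction 1 as [|y z Hy IH Hz Hyz]; [apply conn_refl; apply HR; auto|].
  eapply conn_step; eauto; [apply HR|apply open_edge_transport]; auto.
Qed.

Lemma connected_in_transport_inv om a b :
  connected_in R2 (transport om) a b -> connected_in R1 om (vmap_inv r a) (vmap_inv r b).
Proof.
  induction 1 as [|y z Hy IH Hz Hyz]; [apply conn_refl; apply HR; rewrite vmap_invK; auto|].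
  eapply conn_step; eauto; [apply HR|apply open_edge_transport]; rewrite ?vmap_invK; auto.
Qed.

Lemma cross_transport f1 f2 c s t om : (forall v, f2 (vmap r v) = f1 v + c) ->
  (cross R2 f2 (s + c) (t + c) (transport om) <-> cross R1 f1 s t om).
Proof.
  intros Hf. split.
  - intros (u & w & H1 & H2 & H3 & H4 & H5). exists (vmap_inv r u), (vmap_inv r w).
    rewrite <- (vmap_invK r u) in H1, H2. rewrite <- (vmap_invK r w) in H3, H4.
    rewrite Hf in H2, H4. rewrite HR in H1, H3.
    repeat split; auto; try lia. apply connected_in_transport_inv; auto.
  - intros (u & w & H1 & H2 & H3 & H4 & H5). exists (vmap r u), (vmap r w).
    rewrite !Hf, !HR. repeat split; auto; try lia. apply connected_in_transport; auto.
Qed.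

Lemma edges_in_emap_inv e : edges_in R2 e -> edges_in R1 (emap_inv r e).
Proof.
  intros [H3 [Ha Hb]]. pose proof (emap_inv_dir r e H3) as H3'.
  pose proof (emap_edge_of r (emap_inv r e) H3') as Hc. rewrite emap_invK in Hc. split; auto.
  destruct Hc as [[E1 E2]|[E1 E2]]; rewrite <- !HR, <- E1, <- E2; auto.
Qed.

Lemma Pr_cross_transport p es1 es2 f1 f2 c s t : (forall v, f2 (vmap r v) = f1 v + c) ->
  (forall e, edges_in R1 e -> In e es1) -> (forall e, edges_in R2 e <-> In e es2) ->
  Pr p es2 (cross R2 f2 (s + c) (t + c)) = Pr p es1 (cross R1 f1 s t).
Proof.
  intros Hf Hes1 Hes2. rewrite !Pr_expect.
  rewrite (expect_local_edges p (edges_in R2) _ es2 (map (emap r) es1)) by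
    (apply cross_local || (intros e He; split; intro; [|apply Hes2; auto];
     apply in_map_iff; exists (emap_inv r e); rewrite emap_invK;
     auto using edges_in_emap_inv)).
  change all_closed with (transport all_closed). rewrite expect_transport.
  apply expect_ext. intro om. apply indicator_iff, cross_transport; auto.
Qed.

End Regions.
End Transport.

Ltac vsimpl := repeat match goal with v : V |- _ => destruct v as [[? ?] ?] end;
  unfold vx, vy, vz in *; simpl in *.
Ltac solve_V_eq := repeat (apply pair_equal_spec; split); try reflexivity; try lia.

Definition translate (a b : Z) (v : V) : V := (vx v + a, vy v + b, vz v).

Program Definition translation (a b : Z) : lattice_iso := {|
  vmap := translate a b; vmap_inv := translate (-a) (-b);
  emap := fun e => (translate a b (fst e), snd e);
  emap_inv := fun e => (translate (-a) (-b) (fst e), snd e) |}.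
Next Obligation. unfold translate; vsimpl; solve_V_eq. Qed.
Next Obligation. unfold translate; vsimpl; solve_V_eq. Qed.
Next Obligation. unfold translate; vsimpl; solve_V_eq. Qed.
Next Obligation. unfold translate; vsimpl; solve_V_eq. Qed.
Next Obligation.
  left; simpl; split; auto. unfold translate; vsimpl.
  destruct n as [|[|d]]; simpl; unfold vx, vy, vz; simpl; solve_V_eq.
Qed.

(* The image of the edge
   [(v, 0)] is [(rotate v, 1)], but the image of [(v, 1)] points in the
   negative x-direction, so it is recorded by its other endpoint. *)
Definition rotate (v : V) : V := (- vy v, vx v, vz v).
Definition rotate_inv (v : V) : V := (vy v, - vx v, vz v).
Definition rotate_edge (e : (V * nat)%type) : (V * nat)%type :=
  match snd e with
  | O => (rotate (fst e), 1%nat)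
  | 1%nat => (rotate (shift (fst e) 1), 0%nat)
  | d => (rotate (fst e), d)
  end.
Definition rotate_edge_inv (e : (V * nat)%type) : (V * nat)%type :=
  match snd e with
  | O => ((vy (fst e), - vx (fst e) - 1, vz (fst e)), 1%nat)
  | 1%nat => (rotate_inv (fst e), 0%nat)
  | d => (rotate_inv (fst e), d)
  end.

Program Definition rotation : lattice_iso :=
  {| vmap := rotate; vmap_inv := rotate_inv; emap := rotate_edge; emap_inv := rotate_edge_inv |}.
Next Obligation. unfold rotate, rotate_inv; vsimpl; solve_V_eq. Qed.
Next Obligation. unfold rotate, rotate_inv; vsimpl; solve_V_eq. Qed.
Next Obligation.
  destruct n as [|[|d]]; unfold rotate_edge, rotate_edge_inv, rotate, rotate_inv;
    vsimpl; unfold vx, vy, vz; simpl; solve_V_eq.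
Qed.
Next Obligation.
  destruct n as [|[|d]]; unfold rotate_edge, rotate_edge_inv, rotate, rotate_inv;
    vsimpl; unfold vx, vy, vz; simpl; solve_V_eq.
Qed.
Next Obligation. destruct n as [|[|d]]; simpl in *; lia. Qed.
Next Obligation. destruct n as [|[|d]]; simpl in *; lia. Qed.
Next Obligation.
  destruct n as [|[|[|d]]]; simpl in H; [| | |lia];
    unfold edge_of, rotate_edge, rotate; vsimpl; unfold vx, vy, vz; simpl;
    [left|right|left]; split; solve_V_eq.
Qed.

Lemma Pr_cross_translate p k a b a1 b1 a2 b2 a1' b1' a2' b2' (f : V -> Z) c s t s' t' :
  a1' = a1 + a -> b1' = b1 + a -> a2' = a2 + b -> b2' = b2 + b -> s' = s + c -> t' = t + c ->
  (forall v, f (translate a b v) = f v + c) ->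
  Pr p (box_edges a1' b1' a2' b2' k) (cross (inBox a1' b1' a2' b2' k) f s' t') =
  Pr p (box_edges a1 b1 a2 b2 k) (cross (inBox a1 b1 a2 b2 k) f s t).
Proof.
  intros -> -> -> -> -> -> Hf. apply (Pr_cross_transport (translation a b)); simpl; auto.
  - intro v; unfold inBox, translate; vsimpl; lia.
  - intros e He; apply box_edges_In; auto.
  - intros e; rewrite box_edges_In; tauto.
Qed.

Lemma Pr_cross_rotate p k a1 b1 a2 b2 s t :
  Pr p (box_edges (-b2) (-a2) a1 b1 k) (cross (inBox (-b2) (-a2) a1 b1 k) vy s t) =
  Pr p (box_edges a1 b1 a2 b2 k) (cross (inBox a1 b1 a2 b2 k) vx s t).
Proof.
  rewrite <- (Z.add_0_r s), <- (Z.add_0_r t) at 1.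
  apply (Pr_cross_transport rotation); simpl; auto.
  - intro v; unfold inBox, rotate; vsimpl; lia.
  - intro v; unfold rotate; vsimpl; lia.
  - intros e He; apply box_edges_In; auto.
  - intros e; rewrite box_edges_In; tauto.
Qed.

End Symmetries.

(** * Crossings of long strips *)

Section Strips.
Local Open Scope Z_scope.

Lemma cross_mono_eq (R1 R2 : V -> Prop) f a b a' b' om : a = a' -> b = b' ->
  (forall v, R1 v -> R2 v) -> cross R1 f a b om -> cross R2 f a' b' om.
Proof. intros -> ->; apply cross_mono. Qed.

(* A crossing of an [N x 3N] strip over its width [N] either stays in the
   lower or in the upper [N x 2N] part, or its cluster meets both lines
   [fy = y0 + N] and [fy = y0 + 2N] and thus crosses the middle [N x N]
   square in the other direction. *)
Lemma cross_strip_split (P : V -> Prop) fx fy om x0 y0 N :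
  lipschitz fx -> lipschitz fy -> 0 <= N ->
  cross (fun v => P v /\ x0 <= fx v <= x0 + N /\ y0 <= fy v <= y0 + 3 * N) fx x0 (x0 + N) om ->
  cross (fun v => P v /\ x0 <= fx v <= x0 + N /\ y0 <= fy v <= y0 + 2 * N) fx x0 (x0 + N) om \/
  cross (fun v => P v /\ x0 <= fx v <= x0 + N /\ y0 + N <= fy v <= y0 + 3 * N) fx x0 (x0 + N) om \/
  cross (fun v => P v /\ x0 <= fx v <= x0 + N /\ y0 + N <= fy v <= y0 + 2 * N) fy (y0 + N) (y0 + 2 * N) om.
Proof.
  intros Lx Ly HN (u & w & H1 & H2 & H3 & H4 & H5).
  set (R := fun v => P v /\ x0 <= fx v <= x0 + N /\ y0 <= fy v <= y0 + 3 * N) in *.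
  assert (Band : forall Q : V -> Prop, (forall v, connected_in R om u v -> Q v) ->
      cross (fun v => R v /\ Q v) fx x0 (x0 + N) om).
  { intros Q HQ. exists u, w.
    refine (conj (conj H1 (HQ u (conn_refl _ _ _ H1)))
              (conj H2 (conj (conj H3 (HQ w H5)) (conj H4 _)))).
    apply connected_in_restrict; auto. }
  destruct (classic (exists v1 v2, connected_in R om u v1 /\ connected_in R om u v2 /\
     fy v1 <= y0 + N /\ y0 + 2 * N <= fy v2)) as [(v1 & v2 & C1 & C2 & E1 & E2)|Hn].
  - right; right.
    assert (C : connected_in R om v1 v2)
      by (apply connected_in_trans with u; auto using connected_in_sym).
    destruct (connected_in_level_crossing _ _ _ _ _ _ _ Ly C E1 E2) as (u' & w' & F1 & F2 & C');
      [lia|].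
    exists u', w'. pose proof (connected_in_ends _ _ _ _ C') as [[Ru Hu] [Rw Hw]].
    unfold R in *. repeat split; try tauto; try lia.
    eapply connected_in_mono; [|exact C']. intros v [[? ?] ?]; repeat split; tauto || lia.
  - destruct (classic (forall v, connected_in R om u v -> y0 + N < fy v)) as [Hall|Hex].
    + right; left. eapply cross_mono; [|apply (Band (fun v => y0 + N < fy v)); auto].
      intros v [[? ?] ?]; repeat split; tauto || lia.
    + left. apply not_all_ex_not in Hex. destruct Hex as [v1 Hv1].
      apply Classical_Prop.imply_to_and in Hv1. destruct Hv1 as [C1 E1].
      assert (Hall : forall v, connected_in R om u v -> fy v < y0 + 2 * N).
      { intros v Cv. destruct (Z_lt_ge_dec (fy v) (y0 + 2 * N)); auto.
        exfalso; apply Hn; exists v1, v; repeat split; auto; lia. }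
      eapply cross_mono; [|apply (Band (fun v => fy v < y0 + 2 * N)); auto].
      intros v [[? ?] ?]; repeat split; tauto || lia.
Qed.

Definition box_crossing (k : nat) (p : R) (N : Z) : R :=
  Pr p (box_edges 0 N 0 (2 * N) k) (cross (inBox 0 N 0 (2 * N) k) vx 0 N).

Lemma f_cross_box_crossing k p n : f_cross k p n (2 * n) = box_crossing k p (Z.of_nat n).
Proof. unfold f_cross, box_crossing. rewrite Nat2Z.inj_mul. reflexivity. Qed.

Lemma box_crossing_ge0 k p N : (0 <= p <= 1)%R -> (0 <= box_crossing k p N)%R.
Proof.
  intro Hp. unfold box_crossing. rewrite Pr_expect.
  apply expect_ge0; auto. intro; apply indicator_bounds.
Qed.

Section BoxCrossings.
Variables (p : R) (k : nat) (es : list (V * nat)).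

Lemma expect_cross_box a1 b1 a2 b2 f s t :
  (forall e, edges_in (inBox a1 b1 a2 b2 k) e -> In e es) ->
  expect p es all_closed (ind (cross (inBox a1 b1 a2 b2 k) f s t)) =
  Pr p (box_edges a1 b1 a2 b2 k) (cross (inBox a1 b1 a2 b2 k) f s t).
Proof.
  intro H. rewrite Pr_expect. apply (expect_local_edges p (edges_in (inBox a1 b1 a2 b2 k))).
  - apply cross_local.
  - intros e He; rewrite box_edges_In; split; auto.
Qed.

Lemma expect_cross_tall_box x0 y0 N :
  (forall e, edges_in (inBox x0 (x0 + N) y0 (y0 + 2 * N) k) e -> In e es) ->
  expect p es all_closed (ind (cross (inBox x0 (x0 + N) y0 (y0 + 2 * N) k) vx x0 (x0 + N))) =
  box_crossing k p N.
Proof.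
  intro H. rewrite expect_cross_box by auto. unfold box_crossing.
  apply (Pr_cross_translate p k x0 y0) with (c := x0); try ring.
  intro; unfold translate, vx; reflexivity.
Qed.

Lemma expect_cross_wide_box x0 y0 N :
  (forall e, edges_in (inBox x0 (x0 + 2 * N) y0 (y0 + N) k) e -> In e es) ->
  expect p es all_closed (ind (cross (inBox x0 (x0 + 2 * N) y0 (y0 + N) k) vy y0 (y0 + N))) =
  box_crossing k p N.
Proof.
  intro H. rewrite expect_cross_box by auto. unfold box_crossing.
  rewrite <- Pr_cross_rotate.
  apply (Pr_cross_translate p k (x0 + 2 * N) y0) with (c := y0); try ring.
  intro; unfold translate, vy; reflexivity.
Qed.

Lemma edges_in_sub (B1 B2 : V -> Prop) : (forall v, B1 v -> B2 v) ->
  (forall e, edges_in B2 e -> In e es) -> forall e, edges_in B1 e -> In e es.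
Proof. intros H1 H2 e He; apply H2; eapply edges_in_mono; eauto. Qed.

Hypothesis Hp : (0 <= p <= 1)%R.

Lemma expect_ind_or3 (E A B C : cfg -> Prop) : (forall x, E x -> A x \/ B x \/ C x) ->
  (expect p es all_closed (ind E) <= expect p es all_closed (ind A)
     + expect p es all_closed (ind B) + expect p es all_closed (ind C))%R.
Proof.
  intros H. eapply Rle_trans; [apply (expect_ind_le p Hp es all_closed E _ H)|].
  eapply Rle_trans; [apply expect_ind_or; auto|].
  pose proof (expect_ind_or p Hp es all_closed B C). lra.
Qed.

Lemma expect_cross_strip_x x0 y0 N : 0 <= N ->
  (forall e, edges_in (inBox (x0 - N) (x0 + N) y0 (y0 + 3 * N) k) e -> In e es) ->
  (expect p es all_closed (ind (cross (inBox x0 (x0 + N) y0 (y0 + 3 * N) k) vx x0 (x0 + N)))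
   <= 3 * box_crossing k p N)%R.
Proof.
  intros HN Hes.
  eapply Rle_trans.
  { apply expect_ind_or3 with
      (A := cross (inBox x0 (x0 + N) y0 (y0 + 2 * N) k) vx x0 (x0 + N))
      (B := cross (inBox x0 (x0 + N) (y0 + N) ((y0 + N) + 2 * N) k) vx x0 (x0 + N))
      (C := cross (inBox (x0 - N) ((x0 - N) + 2 * N) (y0 + N) ((y0 + N) + N) k) vy (y0 + N) ((y0 + N) + N)).
    intros om Hom.
    assert (Hom' : cross (fun v => (0 <= vz v <= Z.of_nat k) /\ x0 <= vx v <= x0 + N
                                   /\ y0 <= vy v <= y0 + 3 * N) vx x0 (x0 + N) om)
      by (eapply cross_mono; [|exact Hom]; unfold inBox; intros; tauto).
    destruct (cross_strip_split _ _ _ _ _ _ _ lipschitz_vx lipschitz_vy HN Hom') as [H|[H|H]];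
      [left|right; left|right; right];
      (eapply cross_mono_eq; [| |intros v Hv|exact H]); unfold inBox in *; lia. }
  rewrite !expect_cross_tall_box, expect_cross_wide_box; [lra| |  |];
    (eapply edges_in_sub; [|exact Hes]); unfold inBox; intros; lia.
Qed.

Lemma expect_cross_strip_y x0 y0 N : 0 <= N ->
  (forall e, edges_in (inBox x0 (x0 + 3 * N) (y0 - N) (y0 + N) k) e -> In e es) ->
  (expect p es all_closed (ind (cross (inBox x0 (x0 + 3 * N) y0 (y0 + N) k) vy y0 (y0 + N)))
   <= 3 * box_crossing k p N)%R.
Proof.
  intros HN Hes.
  eapply Rle_trans.
  { apply expect_ind_or3 with
      (A := cross (inBox x0 (x0 + 2 * N) y0 (y0 + N) k) vy y0 (y0 + N))
      (B := cross (inBox (x0 + N) ((x0 + N) + 2 * N) y0 (y0 + N) k) vy y0 (y0 + N))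
      (C := cross (inBox (x0 + N) ((x0 + N) + N) (y0 - N) ((y0 - N) + 2 * N) k) vx (x0 + N) ((x0 + N) + N)).
    intros om Hom.
    assert (Hom' : cross (fun v => (0 <= vz v <= Z.of_nat k) /\ y0 <= vy v <= y0 + N
                                   /\ x0 <= vx v <= x0 + 3 * N) vy y0 (y0 + N) om)
      by (eapply cross_mono; [|exact Hom]; unfold inBox; intros; tauto).
    destruct (cross_strip_split _ _ _ _ _ _ _ lipschitz_vy lipschitz_vx HN Hom') as [H|[H|H]];
      [left|right; left|right; right];
      (eapply cross_mono_eq; [| |intros v Hv|exact H]); unfold inBox in *; lia. }
  rewrite !expect_cross_wide_box, expect_cross_tall_box; [lra| | |];
    (eapply edges_in_sub; [|exact Hes]); unfold inBox; intros; lia.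
Qed.

End BoxCrossings.
End Strips.

(** * Blocks *)

Section Blocks.
Local Open Scope Z_scope.
Variables (k : nat) (N : Z).
Hypothesis HN : 0 < N.

Definition block_of (v : V) : Z * Z := (vx v / N, vy v / N).

Definition block_nbhd (r : Z) (b : Z * Z) : V -> Prop :=
  let (i, j) := b in inBox ((i - r) * N) ((i + 1 + r) * N) ((j - r) * N) ((j + 1 + r) * N) k.

Definition bad_block (b : Z * Z) (om : cfg) : Prop :=
  let (i, j) := b in
  cross (inBox ((i + 1) * N) ((i + 1) * N + N) ((j - 1) * N) ((j - 1) * N + 3 * N) k) vx
    ((i + 1) * N) ((i + 1) * N + N) om \/
  cross (inBox ((i - 1) * N) ((i - 1) * N + N) ((j - 1) * N) ((j - 1) * N + 3 * N) k) vx
    ((i - 1) * N) ((i - 1) * N + N) om \/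
  cross (inBox ((i - 1) * N) ((i - 1) * N + 3 * N) ((j + 1) * N) ((j + 1) * N + N) k) vy
    ((j + 1) * N) ((j + 1) * N + N) om \/
  cross (inBox ((i - 1) * N) ((i - 1) * N + 3 * N) ((j - 1) * N) ((j - 1) * N + N) k) vy
    ((j - 1) * N) ((j - 1) * N + N) om.

Lemma bad_block_local b : local_event (edges_in (block_nbhd 1 b)) (bad_block b).
Proof.
  destruct b as [i j].
  assert (H : forall Rg f s t, (forall v, Rg v -> block_nbhd 1 (i, j) v) ->
            local_event (edges_in (block_nbhd 1 (i, j))) (cross Rg f s t)).
  { intros Rg f s t HR. eapply local_event_mono; [|apply cross_local].
    intros e He. eapply edges_in_mono; eauto. }
  intros om om' Ha. unfold bad_block.
  repeat match goal with
  | |- context [cross ?Rg ?f ?s ?t om] =>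
      rewrite (H Rg f s t ltac:(intros v; unfold block_nbhd, inBox; nia) om om' Ha)
  end; tauto.
Qed.

Lemma bad_block_le (p : R) es b : (0 <= p <= 1)%R ->
  (forall e, edges_in (block_nbhd 2 b) e -> In e es) ->
  (expect p es all_closed (ind (bad_block b)) <= 12 * box_crossing k p N)%R.
Proof.
  intros Hp Hes. destruct b as [i j].
  assert (Hsub : forall a1 b1 a2 b2, (forall v, inBox a1 b1 a2 b2 k v -> block_nbhd 2 (i, j) v) ->
    forall e, edges_in (inBox a1 b1 a2 b2 k) e -> In e es) by (intros; eapply edges_in_sub; eauto).
  assert (HN0 : 0 <= N) by lia.
  pose proof (expect_cross_strip_x p k es Hp ((i + 1) * N) ((j - 1) * N) N HN0).
  pose proof (expect_cross_strip_x p k es Hp ((i - 1) * N) ((j - 1) * N) N HN0).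
  pose proof (expect_cross_strip_y p k es Hp ((i - 1) * N) ((j + 1) * N) N HN0).
  pose proof (expect_cross_strip_y p k es Hp ((i - 1) * N) ((j - 1) * N) N HN0).
  repeat match goal with
  | H : (forall e, edges_in _ e -> In e es) -> _ |- _ =>
      specialize (H ltac:(apply Hsub; unfold block_nbhd, inBox; intros; nia))
  end.
  unfold bad_block.
  eapply Rle_trans; [apply expect_ind_or; auto|].
  eapply Rle_trans; [apply Rplus_le_compat_l, expect_ind_or; auto|].
  eapply Rle_trans; [apply Rplus_le_compat_l, Rplus_le_compat_l, expect_ind_or; auto|].
  lra.
Qed.

Definition far_blocks (b b' : Z * Z) :=
  4 <= Z.abs (fst b - fst b') \/ 4 <= Z.abs (snd b - snd b').

Lemma far_blocks_disjoint b b' e :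
  far_blocks b b' -> edges_in (block_nbhd 1 b) e -> edges_in (block_nbhd 1 b') e -> False.
Proof.
  destruct b as [i j], b' as [i' j']. unfold far_blocks, edges_in, block_nbhd, inBox; simpl.
  intros Hf [_ [H1 _]] [_ [H2 _]].
  destruct Hf as [Hf|Hf].
  - destruct (Z_le_gt_dec i i'); [assert (i + 4 <= i') by lia|assert (i' + 4 <= i) by lia]; nia.
  - destruct (Z_le_gt_dec j j'); [assert (j + 4 <= j') by lia|assert (j' + 4 <= j) by lia]; nia.
Qed.

(* The sup-distance from [v] to the block [b]; it is [<= 0] on the block. *)
Definition block_dist (b : Z * Z) (v : V) : Z :=
  let (i, j) := b in
  Z.max (Z.max (i * N - vx v) (vx v - (i + 1) * N)) (Z.max (j * N - vy v) (vy v - (j + 1) * N)).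

Lemma lipschitz_block_dist b : lipschitz (block_dist b).
Proof. destruct b as [i j]; intros y z; unfold neighbours, block_dist; lia. Qed.

Lemma block_of_bounds v :
  N * (vx v / N) <= vx v < N * (vx v / N) + N /\ N * (vy v / N) <= vy v < N * (vy v / N) + N.
Proof.
  pose proof (Z.div_mod (vx v) N ltac:(lia)). pose proof (Z.mod_pos_bound (vx v) N HN).
  pose proof (Z.div_mod (vy v) N ltac:(lia)). pose proof (Z.mod_pos_bound (vy v) N HN). lia.
Qed.

Lemma block_dist_block_of v : block_dist (block_of v) v <= 0.
Proof. pose proof (block_of_bounds v). unfold block_dist, block_of. nia. Qed.

Lemma cross_of_path Rg Rbox f om u w s t : lipschitz f -> connected_in Rg om u w ->
  f u <= s -> t <= f w -> s <= t -> (forall v, Rg v -> s <= f v <= t -> Rbox v) ->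
  cross Rbox f s t om.
Proof.
  intros Hf C Hu Hw Hst HR.
  destruct (connected_in_level_crossing _ _ _ _ _ _ _ Hf C Hu Hw Hst) as (u' & w' & E1 & E2 & C').
  pose proof (connected_in_ends _ _ _ _ C') as [[R1 B1] [R2 B2]].
  exists u', w'; repeat split; auto.
  eapply connected_in_mono; [|exact C']. intros v [Hv Bv]; auto.
Qed.

(* A path from a block to sup-distance [N] from it crosses the surrounding
   ring of width [N], hence one of its four strips. *)
Lemma bad_block_of_path om y v :
  connected_in (inSlab k) om y v -> N <= block_dist (block_of y) v -> bad_block (block_of y) om.
Proof.
  intros C Hd. pose proof (block_dist_block_of y) as Hy.
  destruct (block_of y) as [i j].
  destruct (connected_in_level_crossing _ _ _ _ _ 0 N (lipschitz_block_dist (i, j)) C Hy Hd)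
    as (u & w & Fu & Fw & Cuw); [lia|].
  set (Ring := fun v => inSlab k v /\ 0 <= block_dist (i, j) v <= N) in *.
  assert (Hring : forall v, Ring v -> (i - 1) * N <= vx v <= (i + 2) * N /\
                                     (j - 1) * N <= vy v <= (j + 2) * N /\ inSlab k v)
    by (intros v0 [Hs Hv0]; unfold block_dist in Hv0; split; [|split]; auto; nia).
  pose proof (connected_in_sym _ _ _ _ Cuw) as Cwu.
  unfold block_dist in Fu, Fw. unfold bad_block.
  destruct (Z.eq_dec (vx w - (i + 1) * N) N);
    [|destruct (Z.eq_dec (i * N - vx w) N);
    [|destruct (Z.eq_dec (vy w - (j + 1) * N) N)]];
    [left|right; left|right; right; left|right; right; right];
    [ apply (cross_of_path Ring _ vx om u w)
    | apply (cross_of_path Ring _ vx om w u)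
    | apply (cross_of_path Ring _ vy om u w)
    | apply (cross_of_path Ring _ vy om w u) ];
    auto using lipschitz_vx, lipschitz_vy; try lia;
    intros v0 Hv0 Hf; pose proof (Hring v0 Hv0); unfold inBox, inSlab in *; lia.
Qed.

End Blocks.

(** * Chains of blocks *)

Section Chains.
Local Open Scope Z_scope.

Definition adjacent_blocks (a b : Z * Z) := Z.abs (fst a - fst b) <= 1 /\ Z.abs (snd a - snd b) <= 1.

Definition block_chain (l : list (Z * Z)) :=
  forall l1 l2 x y, l = l1 ++ x :: y :: l2 -> adjacent_blocks x y.

Lemma block_chain_one x : block_chain [x].
Proof. intros l1 l2 a b E. destruct l1 as [|c [|d l1]]; inversion E. Qed.

Lemma block_chain_cons x y l : adjacent_blocks x y -> block_chain (y :: l) -> block_chain (x :: y :: l).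
Proof.
  intros H C l1 l2 a b E. destruct l1 as [|c l1]; inversion E; subst; auto.
  apply (C l1 l2); auto.
Qed.

Lemma block_chain_head x y l : block_chain (x :: y :: l) -> adjacent_blocks x y.
Proof. intros C. apply (C [] l); auto. Qed.

Lemma block_chain_app_r l1 l2 : block_chain (l1 ++ l2) -> block_chain l2.
Proof. intros C m1 m2 a b E. apply (C (l1 ++ m1) m2). rewrite E, <- app_assoc; auto. Qed.

Lemma block_chain_app_l l1 l2 : block_chain (l1 ++ l2) -> block_chain l1.
Proof. intros C m1 m2 a b E. apply (C m1 (m2 ++ l2)). rewrite E, <- app_assoc; auto. Qed.

Lemma block_chain_tail x l : block_chain (x :: l) -> block_chain l.
Proof. apply (block_chain_app_r [x]). Qed.

Lemma block_chain_firstn n l : block_chain l -> block_chain (firstn n l).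
Proof. intro C. apply (block_chain_app_l _ (skipn n l)). rewrite firstn_skipn; auto. Qed.

Lemma block_chain_rev l : block_chain l -> block_chain (rev l).
Proof.
  intros C l1 l2 a b E. assert (H : adjacent_blocks b a).
  { apply (C (rev l2) (rev l1)).
    rewrite <- (rev_involutive l), E, rev_app_distr. simpl. rewrite <- !app_assoc. reflexivity. }
  unfold adjacent_blocks in *; lia.
Qed.

Definition sup_norm (b : Z * Z) := Z.max (Z.abs (fst b)) (Z.abs (snd b)).

Lemma block_chain_sup_norm r : forall a l, block_chain (a :: l) ->
  forall x, In x (firstn (S r) (a :: l)) -> sup_norm x <= sup_norm a + Z.of_nat r.
Proof.
  induction r; intros a l C x Hx; simpl in Hx.
  - destruct Hx as [<-|[]]; lia.
  - destruct Hx as [<-|Hx]; [lia|]. destruct l as [|y l]; [destruct Hx|].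
    pose proof (block_chain_head _ _ _ C) as Hn.
    specialize (IHr y l (block_chain_tail _ _ C) x Hx). unfold adjacent_blocks, sup_norm in *. lia.
Qed.

Definition king_moves : list (Z * Z) :=
  [(-1,-1); (-1,0); (-1,1); (0,-1); (0,0); (0,1); (1,-1); (1,0); (1,1)].

Lemma king_moves_small d : In d king_moves -> Z.abs (fst d) <= 1 /\ Z.abs (snd d) <= 1.
Proof. simpl; intros H; repeat destruct H as [<-|H]; simpl; lia || destruct H. Qed.

Lemma king_moves_complete a b : adjacent_blocks a b -> In (fst b - fst a, snd b - snd a) king_moves.
Proof.
  unfold adjacent_blocks; intros [H1 H2].
  assert (fst b - fst a = -1 \/ fst b - fst a = 0 \/ fst b - fst a = 1) as [E|[E|E]] by lia;
  (assert (snd b - snd a = -1 \/ snd b - snd a = 0 \/ snd b - snd a = 1) as [F|[F|F]] by lia);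
  rewrite E, F; simpl; tauto.
Qed.

Fixpoint block_walks (b : Z * Z) (r : nat) : list (list (Z * Z)) :=
  match r with
  | O => [[b]]
  | S r' => flat_map (fun d => map (cons b) (block_walks (fst b + fst d, snd b + snd d) r')) king_moves
  end.

Lemma length_flat_map_const {A B} (f : A -> list B) l c : (forall x, length (f x) = c) ->
  length (flat_map f l) = (length l * c)%nat.
Proof. intro H; induction l; simpl; auto. rewrite length_app, H, IHl. lia. Qed.

Lemma length_block_walks b r : length (block_walks b r) = (9 ^ r)%nat.
Proof.
  revert b; induction r; intro b; [reflexivity|]. cbn [block_walks].
  rewrite (length_flat_map_const _ _ (9 ^ r)%nat); [simpl; lia|].
  intro d; rewrite length_map; auto.
Qed.

Lemma block_walks_complete r : forall b l, block_chain (b :: l) -> length l = r ->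
  In (b :: l) (block_walks b r).
Proof.
  induction r; intros b l C E.
  - destruct l; simpl in *; [auto|lia].
  - destruct l as [|y l]; simpl in E; [lia|]. cbn [block_walks]. apply in_flat_map.
    exists (fst y - fst b, snd y - snd b).
    split; [apply king_moves_complete, (block_chain_head _ _ _ C)|].
    apply in_map; simpl. replace (fst b + (fst y - fst b), snd b + (snd y - snd b)) with y
      by (destruct y; simpl; f_equal; lia).
    apply IHr; [eapply block_chain_tail; eauto|lia].
Qed.

Lemma block_walks_length r : forall a l, In l (block_walks a r) -> length l = S r.
Proof.
  induction r; intros a l Hl; cbn [block_walks] in Hl.
  - destruct Hl as [<-|[]]; auto.
  - apply in_flat_map in Hl. destruct Hl as [d [Hd Hl]]. apply in_map_iff in Hl.
    destruct Hl as [l' [<- Hl']]. simpl. f_equal. eapply IHr; eauto.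
Qed.

Lemma block_walks_sup_norm r : forall a l, In l (block_walks a r) ->
  forall x, In x l -> sup_norm x <= sup_norm a + Z.of_nat r.
Proof.
  induction r; intros a l Hl x Hx; cbn [block_walks] in Hl.
  - destruct Hl as [<-|[]]. destruct Hx as [<-|[]]. lia.
  - apply in_flat_map in Hl. destruct Hl as [d [Hd Hl]]. apply in_map_iff in Hl.
    destruct Hl as [l' [<- Hl']].
    destruct Hx as [<-|Hx]; [lia|].
    pose proof (IHr _ _ Hl' x Hx). pose proof (king_moves_small d Hd). unfold sup_norm in *; simpl in *. lia.
Qed.

Fixpoint pairwise_far (s : list (Z * Z)) : Prop :=
  match s with [] => True | b :: s' => (forall b', In b' s' -> far_blocks b b') /\ pairwise_far s' end.

Definition close_blocksb (a b : Z * Z) : bool :=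
  (Z.abs (fst a - fst b) <=? 3) && (Z.abs (snd a - snd b) <=? 3).

Definition blocks_within3 (a : Z * Z) : list (Z * Z) :=
  flat_map (fun i => map (fun j => (fst a + i, snd a + j)) (zrange (-3) 3)) (zrange (-3) 3).

Lemma length_blocks_within3 a : length (blocks_within3 a) = 49%nat.
Proof.
  unfold blocks_within3. rewrite (length_flat_map_const _ _ 7%nat); [reflexivity|].
  intro; rewrite length_map; reflexivity.
Qed.

Lemma blocks_within3_complete a b : close_blocksb a b = true -> In b (blocks_within3 a).
Proof.
  unfold close_blocksb; rewrite Bool.andb_true_iff, !Z.leb_le; intros [H1 H2].
  apply in_flat_map. exists (fst b - fst a). split; [apply zrange_In; lia|].
  apply in_map_iff. exists (snd b - snd a). split; [destruct b; simpl; f_equal; lia|].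
  apply zrange_In; lia.
Qed.

Lemma length_filter_split {A} (f : A -> bool) l :
  (length (filter f l) + length (filter (fun x => negb (f x)) l))%nat = length l.
Proof. induction l; simpl; auto. destruct (f a); simpl; lia. Qed.

(* Greedy selection: keep a block, discard the at most 48 others within
   distance 3 of it, and recurse. *)
Lemma pairwise_far_subset n : forall L, (length L <= n)%nat -> NoDup L ->
  exists s, incl s L /\ pairwise_far s /\ (length L <= 49 * length s)%nat.
Proof.
  induction n; intros L Hl Hd.
  { destruct L; simpl in Hl; [|lia]. exists []; simpl; repeat split; auto; apply incl_nil_l. }
  destruct L as [|a L']; [exists []; simpl; repeat split; auto; apply incl_nil_l|].
  inversion Hd as [|? ? Ha Hd']; subst.
  set (L'' := filter (fun b => negb (close_blocksb a b)) L').
  pose proof (length_filter_split (close_blocksb a) L') as Hsplit.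
  destruct (IHn L'') as (s & Hs1 & Hs2 & Hs3); [simpl in Hl; unfold L''; lia|apply NoDup_filter; auto|].
  assert (Hclose : (length (a :: filter (close_blocksb a) L') <= 49)%nat).
  { rewrite <- (length_blocks_within3 a). apply NoDup_incl_length.
    - constructor; [rewrite filter_In; tauto|apply NoDup_filter; auto].
    - intros x [<-|Hx].
      + apply blocks_within3_complete. unfold close_blocksb; rewrite !Z.sub_diag; reflexivity.
      + apply filter_In in Hx. apply blocks_within3_complete; tauto. }
  exists (a :: s). split; [|split].
  - intros x [<-|Hx]; simpl; auto. right. apply Hs1, filter_In in Hx; tauto.
  - split; auto. intros b' Hb'. apply Hs1, filter_In in Hb'.
    destruct Hb' as [_ Hb']. apply Bool.negb_true_iff, Bool.andb_false_iff in Hb'.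
    rewrite !Z.leb_gt in Hb'. unfold far_blocks. lia.
  - simpl in *. unfold L'' in *. lia.
Qed.

End Chains.

(** * The arm event *)

Definition arm_event (k m : nat) (om : cfg) : Prop :=
  exists v, vboundary k (ballbar k m) v /\ connected_in (inSlab k) om origin v.

Lemma arm_prob_expect k p m : arm_prob k p m =
  expect p (box_edges (- Z.of_nat m) (Z.of_nat m) (- Z.of_nat m) (Z.of_nat m) k) all_closed
    (ind (arm_event k m)).
Proof. apply Pr_expect. Qed.

Lemma vboundary_ballbar k m v : vboundary k (ballbar k m) v ->
  ballbar k m v /\ (Z.abs (vx v) = Z.of_nat m \/ Z.abs (vy v) = Z.of_nat m)%Z.
Proof.
  intros [Hb [w [Hs [Ha Hn]]]]. split; auto. apply adjacent_neighbours in Ha.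
  unfold neighbours, ballbar, inBox, inSlab in *. lia.
Qed.

Lemma arm_event_all_closed k m : (1 <= m)%nat -> ~ arm_event k m all_closed.
Proof.
  intros Hm [v [Hb Hc]]. apply connected_in_all_closed in Hc. subst.
  apply vboundary_ballbar in Hb. destruct Hb as [_ H]. unfold origin, vx, vy in H; simpl in H. lia.
Qed.

Section ArmChains.
Local Open Scope Z_scope.
Variables (k : nat) (N : Z).
Hypothesis HN : 0 < N.

Lemma app_tail_last {A} (P X B : list A) (o : A) : X <> [] -> P ++ X = B ++ [o] ->
  exists P', X = P' ++ [o].
Proof.
  intros Hx E. destruct (exists_last Hx) as [X' [x ->]]. rewrite app_assoc in E.
  apply app_inj_tail in E. destruct E as [_ ->]. eauto.
Qed.

Definition block_eq_dec (a b : Z * Z) : {a = b} + {a <> b}.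
Proof. decide equality; apply Z.eq_dec. Defined.

(* The blocks visited by an open path from the origin to [y], with loops
   erased: a chain of distinct blocks from [block_of y] back to the origin's
   block, each of which contains a vertex of the cluster of the origin. *)
Lemma path_block_chain om y : connected_in (inSlab k) om origin y ->
  exists L, block_chain (block_of N y :: L) /\ NoDup (block_of N y :: L) /\
    (exists P, block_of N y :: L = P ++ [(0, 0)]) /\
    forall b, In b (block_of N y :: L) ->
      exists y', connected_in (inSlab k) om origin y' /\ block_of N y' = b.
Proof.
  induction 1 as [|y z Hy IH Hz Hyz].
  - exists []. change (block_of N origin) with (0, 0).
    split; [apply block_chain_one|]. split; [repeat constructor; intros []|].
    split; [exists []; reflexivity|]. intros b [<-|[]].
    exists origin; split; auto. apply conn_refl. unfold inSlab, origin, vz; simpl; lia.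
  - destruct IH as (L & C1 & D1 & [P EP] & M1).
    destruct (in_dec block_eq_dec (block_of N z) (block_of N y :: L)) as [Hin|Hnin].
    + destruct (in_split _ _ Hin) as [A [B EAB]]. exists B.
      rewrite EAB in C1, D1, M1, EP. split; [|split; [|split]].
      * eapply block_chain_app_r; eauto.
      * eapply NoDup_app_remove_l; eauto.
      * eapply app_tail_last; [|exact EP]. discriminate.
      * intros b Hb; apply M1, in_app_iff; auto.
    + exists (block_of N y :: L). split; [|split; [|split]].
      * apply block_chain_cons; auto. apply open_edge_neighbours in Hyz.
        pose proof (block_of_bounds N HN y). pose proof (block_of_bounds N HN z).
        unfold neighbours, adjacent_blocks, block_of in *; simpl. nia.
      * constructor; auto.
      * exists (block_of N z :: P). rewrite EP; reflexivity.
      * intros b [<-|Hb]; auto. exists z; split; auto. eapply conn_step; eauto.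
Qed.

(* Each of the first [R + 1] blocks of the chain is at sup-distance at most
   [R N + N] from the origin, hence at distance at least [N] from the
   endpoint [v] on the boundary of [B_m]; the piece of the path from that
   block to [v] makes it bad. *)
Lemma arm_event_bad_walk m R om : (Z.of_nat R + 3) * N <= Z.of_nat m -> arm_event k m om ->
  exists L, In L (block_walks (0, 0) R) /\ NoDup L /\ forall b, In b L -> bad_block k N b om.
Proof.
  intros HR [v [Hb Cv]]. apply vboundary_ballbar in Hb. destruct Hb as [Hbb Hbn].
  destruct (path_block_chain om v Cv) as (L & C1 & D1 & [P EP] & M1).
  assert (ELf : rev (block_of N v :: L) = (0, 0) :: rev P) by (rewrite EP, rev_app_distr; reflexivity).
  assert (CLf : block_chain ((0, 0) :: rev P)) by (rewrite <- ELf; apply block_chain_rev; auto).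
  assert (DLf : NoDup ((0, 0) :: rev P)) by (rewrite <- ELf; apply NoDup_rev; auto).
  assert (Hlen : (R <= length (rev P))%nat).
  { assert (Hv : In (block_of N v) ((0, 0) :: rev P)) by (rewrite <- ELf, <- in_rev; simpl; auto).
    pose proof (block_chain_sup_norm (length (rev P)) _ _ CLf (block_of N v)) as Hn.
    rewrite firstn_all2 in Hn by (simpl; lia). specialize (Hn Hv).
    pose proof (block_of_bounds N HN v). unfold sup_norm, block_of in Hn; simpl in Hn.
    unfold ballbar, inBox in Hbb. nia. }
  exists (firstn (S R) ((0, 0) :: rev P)). split; [|split].
  - apply block_walks_complete; [apply (block_chain_firstn (S R)) in CLf; exact CLf|].
    rewrite length_firstn; simpl; lia.
  - apply (NoDup_app_remove_r _ (skipn (S R) ((0, 0) :: rev P))). rewrite firstn_skipn; auto.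
  - intros b Hbin.
    pose proof (block_chain_sup_norm R _ _ CLf b Hbin) as Hbn'.
    assert (Hb2 : In b (block_of N v :: L)).
    { rewrite in_rev, ELf, <- (firstn_skipn (S R)). apply in_app_iff; auto. }
    destruct (M1 b Hb2) as [y' [Cy' <-]].
    apply (bad_block_of_path k N HN om y' v).
    + eapply connected_in_trans; [apply connected_in_sym; exact Cy'|exact Cv].
    + destruct (block_of N y') as [i j]. unfold sup_norm in Hbn'; simpl in Hbn'.
      unfold block_dist. unfold ballbar, inBox in Hbb. nia.
Qed.

End ArmChains.

(** * Exponential decay *)

Lemma expect_all_bad_le (p : R) k (N : Z) es s c : (0 < N)%Z -> 0 <= p <= 1 -> 0 <= c ->
  pairwise_far s -> (forall b, In b s -> expect p es all_closed (ind (bad_block k N b)) <= c) ->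
  expect p es all_closed (ind (fun om => forall b, In b s -> bad_block k N b om)) <= c ^ length s.
Proof.
  intros HN Hp Hc. induction s as [|b s IH]; simpl; intros Hpw Hb.
  - rewrite (expect_ext _ _ _ _ (fun _ => 1)), expect_const; [lra|].
    intro; apply indicator_true; intros b [].
  - rewrite (expect_ext _ _ _ _ (ind (fun om => bad_block k N b om /\ forall b', In b' s -> bad_block k N b' om))).
    2:{ intro om; apply indicator_iff. split; [intro H; split; auto|intros [H1 H2] b' [<-|Hb']]; auto. }
    rewrite (expect_ind_and_disjoint p es all_closed (edges_in (block_nbhd k N 1 b))
               (fun e => exists b', In b' s /\ edges_in (block_nbhd k N 1 b') e)).
    + destruct Hpw as [Hfar Hpw]. apply Rmult_le_compat; auto.
      1, 2: apply expect_ge0; auto; intro; apply indicator_bounds.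
    + apply bad_block_local; auto.
    + intros om om' Ha. split; intros H b' Hb'; apply (bad_block_local k N HN b' om om'); auto;
        intros v d Hs; apply Ha; eauto.
    + intros e H1 [b' [Hb' H2]]. apply (far_blocks_disjoint k N HN b b' e); auto.
      apply (proj1 Hpw); auto.
Qed.

Lemma pow_le1 x n : 0 <= x <= 1 -> x ^ n <= 1.
Proof. intro H; induction n; simpl; [lra|]. pose proof (pow_le x n (proj1 H)). nra. Qed.

Lemma pow_le_pow_le1 x n m : 0 <= x <= 1 -> (n <= m)%nat -> x ^ m <= x ^ n.
Proof.
  intros H Hnm. replace m with (n + (m - n))%nat by lia. rewrite pow_add.
  pose proof (pow_le1 x (m - n) H). pose proof (pow_le x n (proj1 H)). nra.
Qed.

(* Peierls bound: sum over the [9^R] walks of [R] steps, and in each walk of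
   distinct bad blocks pick [q] pairwise far ones. *)
Lemma arm_prob_le_walks k p m (N : Z) R q : 0 <= p <= 1 -> (0 < N)%Z ->
  ((Z.of_nat R + 3) * N <= Z.of_nat m)%Z -> (49 * q <= S R)%nat -> 12 * box_crossing k p N <= 1 ->
  arm_prob k p m <= INR (9 ^ R) * (12 * box_crossing k p N) ^ q.
Proof.
  intros Hp HN HR Hq HG.
  pose proof (box_crossing_ge0 k p N Hp).
  rewrite arm_prob_expect.
  set (es := box_edges (- Z.of_nat m) (Z.of_nat m) (- Z.of_nat m) (Z.of_nat m) k).
  eapply Rle_trans.
  { apply (expect_ind_le p Hp es all_closed _ (fun om => exists L, In L (block_walks (0, 0)%Z R) /\
      (NoDup L /\ forall b, In b L -> bad_block k N b om))).
    intros om Hom. apply (arm_event_bad_walk k N HN m R om HR Hom). }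
  eapply Rle_trans; [apply expect_ind_exists; auto|].
  rewrite <- (length_block_walks (0, 0)%Z R). apply sumR_le_const.
  intros L HL. destruct (classic (NoDup L)) as [D|D].
  2:{ rewrite (expect_ext _ _ _ _ (fun _ => 0)), expect_const; [apply pow_le; lra|].
      intro; apply indicator_false; tauto. }
  destruct (pairwise_far_subset (length L) L (le_n _) D) as (s & Hs1 & Hs2 & Hs3).
  eapply Rle_trans.
  { apply (expect_ind_le p Hp es all_closed _ (fun om => forall b, In b s -> bad_block k N b om)).
    intros om [_ Hom] b Hb; apply Hom, Hs1; auto. }
  eapply Rle_trans; [apply (expect_all_bad_le p k N es s (12 * box_crossing k p N)); auto; [lra|]|].
  - intros b Hb. apply bad_block_le; auto. intros e He. apply box_edges_In.
    eapply edges_in_mono; [|exact He]. apply Hs1 in Hb.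
    pose proof (block_walks_sup_norm _ _ _ HL b Hb) as Hn.
    destruct b as [i j]. unfold sup_norm in Hn; simpl in Hn.
    intros v Hv; unfold block_nbhd, inBox in *. nia.
  - apply pow_le_pow_le1; [lra|]. pose proof (block_walks_length _ _ _ HL). lia.
Qed.

Lemma arm_prob_lt1 k p m : 0 <= p <= 1 -> (1 <= m)%nat ->
  arm_prob k p m <= 1 - (1 - p) ^ length (box_edges (- Z.of_nat m) (Z.of_nat m) (- Z.of_nat m) (Z.of_nat m) k).
Proof.
  intros Hp Hm. rewrite arm_prob_expect.
  set (es := box_edges (- Z.of_nat m) (Z.of_nat m) (- Z.of_nat m) (Z.of_nat m) k).
  pose proof (expect_ge_all_closed p Hp es (ind (fun om => ~ arm_event k m om))
    (fun _ => proj1 (indicator_bounds _))) as Hlow.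
  assert (E : ind (fun om => ~ arm_event k m om) all_closed = 1)
    by (apply indicator_true, arm_event_all_closed; auto).
  rewrite E in Hlow.
  assert (Hsum : expect p es all_closed (ind (arm_event k m))
                 + expect p es all_closed (ind (fun om => ~ arm_event k m om)) = 1).
  { rewrite <- expect_plus, <- (expect_const p es all_closed 1).
    apply expect_ext; intro; unfold ind; rewrite indicator_not; ring. }
  lra.
Qed.

Fixpoint open_all (es : list (V * nat)) (om : cfg) : cfg :=
  match es with [] => om | e :: es' => open_all es' (upd om e true) end.

Lemma expect_p1 es om F : expect 1 es om F = F (open_all es om).
Proof. revert om; induction es; intro om; simpl; auto. rewrite !IHes. ring. Qed.

Lemma open_all_In es om v d : In (v, d) es -> open_all es om v d = true.
Proof.
  revert om; induction es as [|e es IH]; intros om H; simpl in *; [tauto|].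
  destruct (in_dec edge_eq_dec (v, d) es) as [Hin|Hnin]; auto.
  destruct H as [->|H]; [|tauto]. clear IH. revert om.
  induction es as [|e' es IH]; intro om; simpl.
  - rewrite updE; destruct edge_eq_dec; congruence.
  - rewrite upd_comm by (intro; apply Hnin; simpl; auto). apply IH. intro; apply Hnin; simpl; auto.
Qed.

Lemma box_crossing_p1 k N : (0 <= N)%Z -> box_crossing k 1 N = 1.
Proof.
  intro HN. unfold box_crossing. rewrite Pr_expect, expect_p1. apply indicator_true.
  set (om := open_all _ _).
  assert (Hline : forall t : nat, (Z.of_nat t <= N)%Z ->
    connected_in (inBox 0 N 0 (2 * N) k) om origin (Z.of_nat t, 0%Z, 0%Z)).
  { induction t; intros Ht; [apply conn_refl; unfold origin, inBox, vx, vy, vz; cbn [fst snd]; lia|].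
    rewrite Nat2Z.inj_succ in *. eapply conn_step; [apply IHt; lia|unfold inBox, vx, vy, vz; cbn [fst snd]; lia|].
    exists 0%nat. split; [lia|]. left. split.
    - unfold shift, vx, vy, vz; simpl. repeat (apply pair_equal_spec; split); lia.
    - apply open_all_In, box_edges_In. split; [simpl; lia|].
      unfold inBox, shift, vx, vy, vz; cbn [fst snd]; lia. }
  exists origin, (N, 0%Z, 0%Z).
  repeat split; try (unfold origin, inBox, vx, vy, vz; cbn [fst snd]; lia).
  replace (N, 0%Z, 0%Z) with (Z.of_nat (Z.to_nat N), 0%Z, 0%Z) by (rewrite Z2Nat.id; auto).
  apply Hline; lia.
Qed.

Lemma exp_le_exp x y : x <= y -> exp x <= exp y.
Proof. intros [H| ->]; [left; apply exp_increasing; auto|right; auto]. Qed.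

Lemma list_sum_map_ge f K m : (m < K)%nat -> (f m <= list_sum (map f (seq 0 K)))%nat.
Proof.
  intro H. induction K; [lia|]. rewrite seq_S, map_app, list_sum_app. simpl.
  destruct (Nat.eq_dec m K); [subst; lia|]. specialize (IHK ltac:(lia)). lia.
Qed.

Lemma exp_decay_of_geometric (u : nat -> R) (L : nat) (a : R) : (0 < L)%nat -> 0 < a < 1 ->
  (forall m, (1 <= m)%nat -> (m <= 2 * L)%nat -> u m <= a) ->
  (forall m, (2 * L < m)%nat -> u m <= (/ 2) ^ (m / L)) ->
  exists c, 0 < c /\ forall m, (1 <= m)%nat -> u m <= exp (- c * INR m).
Proof.
  intros HL Ha Hsmall Hlarge.
  assert (H2L : 0 < INR (2 * L)) by (apply lt_0_INR; lia).
  assert (Hla : ln a < 0) by (rewrite <- ln_1; apply ln_increasing; lra).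
  assert (Hl2 : 0 < ln 2) by (rewrite <- ln_1; apply ln_increasing; lra).
  set (c1 := ln 2 / INR (2 * L)). set (c2 := - ln a / INR (2 * L)).
  assert (Hc1 : 0 < c1) by (apply Rdiv_lt_0_compat; lra).
  assert (Hc2 : 0 < c2) by (apply Rdiv_lt_0_compat; lra).
  exists (Rmin c1 c2). split; [apply Rmin_glb_lt; auto|]. intros m Hm.
  pose proof (Rmin_l c1 c2). pose proof (Rmin_r c1 c2). pose proof (pos_INR m).
  destruct (le_lt_dec m (2 * L)) as [Hsm|Hlm].
  - apply Rle_trans with a; auto.
    rewrite <- (exp_ln a) by lra. apply exp_le_exp.
    assert (c2 * INR (2 * L) = - ln a) by (unfold c2; field; lra).
    apply le_INR in Hsm. nra.
  - eapply Rle_trans; [apply Hlarge; auto|].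
    set (q := (m / L)%nat).
    rewrite <- Rpower_pow by lra. unfold Rpower. rewrite ln_Rinv by lra.
    apply exp_le_exp.
    assert (Hmq : INR m <= INR (2 * L) * INR q).
    { rewrite <- mult_INR. apply le_INR.
      pose proof (Nat.div_mod m L ltac:(lia)). pose proof (Nat.mod_upper_bound m L ltac:(lia)).
      nia. }
    assert (c1 * INR (2 * L) = ln 2) by (unfold c1; field; lra).
    nra.
Qed.

Lemma arm_prob_le_half_pow k p (n : nat) : 0 <= p <= 1 -> (1 <= n)%nat ->
  9 ^ 49 * (12 * box_crossing k p (Z.of_nat n)) <= / 2 ->
  forall m, (2 * (51 * n) < m)%nat -> arm_prob k p m <= (/ 2) ^ (m / (51 * n)).
Proof.
  intros Hp Hn HG m Hm.
  set (G := box_crossing k p (Z.of_nat n)) in *.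
  pose proof (box_crossing_ge0 k p (Z.of_nat n) Hp). fold G in H.
  assert (HK : 1 <= 9 ^ 49) by (apply pow_R1_Rle; lra).
  set (q := (m / (51 * n))%nat).
  assert (Hq : (2 <= q)%nat) by (apply Nat.div_le_lower_bound; lia).
  assert (Hmq : (q * (51 * n) <= m)%nat) by (rewrite Nat.mul_comm; apply Nat.Div0.mul_div_le; lia).
  assert (HR : ((Z.of_nat (49 * q - 1) + 3) * Z.of_nat n <= Z.of_nat m)%Z).
  { rewrite Nat2Z.inj_sub, Nat2Z.inj_mul by lia. nia. }
  eapply Rle_trans; [apply (arm_prob_le_walks k p m (Z.of_nat n) (49 * q - 1) q); auto; [lia|lia|fold G; nra]|].
  fold G. rewrite pow_INR. replace (INR 9) with 9 by (simpl; lra).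
  apply Rle_trans with ((9 ^ 49 * (12 * G)) ^ q).
  - rewrite (Rpow_mult_distr (9 ^ 49)), <- pow_mult.
    apply Rmult_le_compat_r; [apply pow_le; lra|].
    apply Rle_pow; [lra|lia].
  - apply pow_incr. split; [nra|auto].
Qed.

Lemma arm_prob_le_uniform k p (M : nat) : 0 <= p < 1 ->
  exists a, 0 < a < 1 /\ forall m, (1 <= m)%nat -> (m <= M)%nat -> arm_prob k p m <= a.
Proof.
  intros Hp.
  set (size := fun m : nat => length (box_edges (- Z.of_nat m) (Z.of_nat m) (- Z.of_nat m) (Z.of_nat m) k)).
  set (delta := (1 - p) ^ list_sum (map size (seq 0 (S M)))).
  assert (Hd : 0 < delta <= 1) by (split; [apply pow_lt|apply pow_le1]; lra).
  exists (1 - delta / 2). split; [lra|]. intros m Hm HmM.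
  eapply Rle_trans; [apply arm_prob_lt1; auto; lra|].
  pose proof (pow_le_pow_le1 (1 - p) (size m) _ ltac:(lra) (list_sum_map_ge size (S M) m ltac:(lia))).
  fold (size m). fold delta in H. lra.
Qed.

Theorem mainTheorem10 :
  exists c2 : R, 0 < c2 /\
    forall (k : nat) (p : R), (1 <= k)%nat -> 0 <= p <= 1 ->
      (exists n : nat, (1 <= n)%nat /\ f_cross k p n (2 * n) < c2) ->
      exists c : R, 0 < c /\
        forall m : nat, (1 <= m)%nat -> arm_prob k p m <= exp (- c * INR m).
Proof.
  assert (HK : 1 <= 9 ^ 49) by (apply pow_R1_Rle; lra).
  exists (/ (24 * 9 ^ 49)). split; [apply Rinv_0_lt_compat; lra|].
  intros k p _ Hp [n [Hn Hf]].
  rewrite f_cross_box_crossing in Hf.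
  pose proof (box_crossing_ge0 k p (Z.of_nat n) Hp) as HG0.
  assert (HG : 9 ^ 49 * (12 * box_crossing k p (Z.of_nat n)) <= / 2).
  { apply (Rmult_lt_compat_r (24 * 9 ^ 49)) in Hf; [|lra].
    rewrite Rinv_l in Hf; lra. }
  assert (Hp1 : p < 1).
  { destruct (Req_dec p 1) as [->|]; [|lra].
    rewrite box_crossing_p1 in HG by lia. lra. }
  destruct (arm_prob_le_uniform k p (2 * (51 * n)) ltac:(lra)) as (a & Ha & Hsmall).
  apply (exp_decay_of_geometric (arm_prob k p) (51 * n) a); auto; [lia|].
  apply arm_prob_le_half_pow; auto.
Qed.
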